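(* Let $g \ge 3$ be an integer and let $\mathcal{S}_{4,g}$ be the set of numerical semigroups of multiplicity $4$ and genus $g$. If $g=3$ then $\#\mathcal{S}_{4,g}=1$. If $g \ge 4$ then $\#\mathcal{S}_{4,g} = -g + \frac{5}{2}\lfloor \frac{g}{4}\rfloor + \lfloor \frac{g}{2}\rfloor + \frac12\lfloor \frac{g+5}{6}\rfloor + g\lfloor \frac{g+5}{6}\rfloor - \lfloor \frac{g+5}{6}\rfloor\lfloor \frac{g}{2}\rfloor - \frac32\lfloor \frac{g+5}{6}\rfloor^2 - g\lfloor \frac{g}{4}\rfloor + \frac32\lfloor \frac{g}{4}\rfloor^2 + \lfloor \frac{g}{4}\rfloor\lfloor \frac{g}{2}\rfloor - \frac12\lfloor \frac{g+2}{6}\rfloor + \lfloor \frac{g+2}{6}\rfloor\lfloor \frac{g}{2}\rfloor - \frac32\lfloor \frac{g+2}{6}\rfloor^2 + \frac12\lfloor \frac{g+2}{4}\rfloor + \frac32\lfloor \frac{g+2}{4}\rfloor^2 - \lfloor \frac{g+2}{4}\rfloor\lfloor \frac{g}{2}\rfloor + \lfloor \frac{g+1}{2}\rfloor\lfloor \frac{g}{2}\rfloor - \lfloor \frac{g+1}{2}\rfloor\lceil \frac{2g-3}{8}\rceil + \lfloor \frac{g+1}{2}\rfloor - \lceil \frac{2g-7}{8}\rceil\lfloor \frac{g}{2}\rfloor + \lceil \frac{2g-7}{8}\rceil\lceil \frac{2g-3}{8}\rceil - \lceil \frac{2g-7}{8}\rceil$.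
   Context: A numerical semigroup is a subset $S \subseteq \mathbb{N}$ containing $0$, closed under addition, with $\mathbb{N}\setminus S$ finite. Its multiplicity is $\min(S\setminus\{0\})$ and its genus is $\#(\mathbb{N}\setminus S)$. *)

From mathcomp Require Import all_boot all_order all_algebra.
Set Implicit Arguments. Unset Strict Implicit. Unset Printing Implicit Defensive.
Import Order.TTheory GRing.Theory Num.Theory.

Definition numerical_semigroup (S : nat -> bool) : Prop :=
  [/\ S 0, (forall a b, S a -> S b -> S (a + b)) & exists N, forall n, N <= n -> S n].

Definition multiplicity (S : nat -> bool) (m : nat) : Prop :=
  [/\ 0 < m, S m & forall k, 0 < k < m -> ~~ S k].

Definition genus (S : nat -> bool) (g : nat) : Prop :=
  exists s : seq nat, [/\ uniq s, (forall n, (n \in s) = ~~ S n) & size s = g].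

(* A (extensional) property P of subsets of N has exactly N elements:
   there is a bijection from 'I_N onto {S | P S}, up to extensional equality. *)
Definition has_card (P : (nat -> bool) -> Prop) (N : nat) : Prop :=
  exists f : 'I_N -> (nat -> bool),
    [/\ forall i, P (f i),
        forall i j, f i =1 f j -> i = j
      & forall S, P S -> exists i, f i =1 S].

Definition S4g (g : nat) (S : nat -> bool) : Prop :=
  [/\ numerical_semigroup S, multiplicity S 4 & genus S g].

From mathcomp Require Import all_boot all_order all_algebra.
From mathcomp Require Import zify ring.
Import Order.TTheory GRing.Theory Num.Theory.

Set Implicit Arguments.
Unset Strict Implicit.
Unset Printing Implicit Defensive.

(* A numerical semigroup S of multiplicity 4 is determined by its Kunz
   coordinates: k_r is the least k with 4 k + r in S (r = 1, 2, 3).  Closure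
   under addition amounts to the inequalities k2 <= 2 k1, k3 <= k1 + k2,
   k2 <= 2 k3 + 1 and k1 <= k2 + k3 + 1 (sums of residues 1+1, 1+2, 3+3, 2+3),
   and the genus is k1 + k2 + k3.  For g >= 4 the number of solutions with
   k1 + k2 + k3 = g and fixed k2 = y > 0 is min(y + 1, g + 1 - 2y); shifting y
   by one shows that the total C(g) satisfies C(g + 2) = C(g) + floor((g+5)/3),
   whence C(g) = floor((g^2 + 6g)/12).  The paper's expression equals this
   value, as one checks for each residue of g modulo 24. *)

Lemma numerical_semigroup_threshold S m r :
  numerical_semigroup S -> S m -> 0 < m -> exists k, forall q, S (q * m + r) = (k <= q).
Proof.
case=> S0 Sadd [N SN] Sm m_gt0.
have Smul q : S (q * m) by elim: q => [|q IH] //; rewrite mulSn Sadd.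
have [|k Sk k_min] := ex_minnP (_ : exists q, S (q * m + r)).
  by exists N; apply: SN; nia.
exists k => q; apply/idP/idP => [/k_min //|le_kq].
by rewrite -(subnK le_kq) mulnDl [_ + k * m]addnC addnAC Sadd.
Qed.

Lemma genus_uniq S g g' : genus S g -> genus S g' -> g = g'.
Proof.
move=> [s [s_uniq s_gaps <-]] [t [t_uniq t_gaps <-]].
by apply/perm_size/uniq_perm => // n; rewrite s_gaps t_gaps.
Qed.

Lemma S4g_eq g S S' : S =1 S' -> S4g g S -> S4g g S'.
Proof.
move=> eqS [[S0 Sadd [N SN]] [m_gt0 S4 gaps] [s [s_uniq s_gaps s_size]]].
split; first split.
- by rewrite -eqS.
- by move=> a b; rewrite -!eqS; apply: Sadd.
- by exists N => n /SN; rewrite eqS.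
- by split=> // [|k /gaps]; rewrite -eqS.
- by exists s; split=> // n; rewrite s_gaps eqS.
Qed.

Lemma has_card_seq (T : eqType) (P : (nat -> bool) -> Prop) (s : seq T)
    (f : T -> nat -> bool) :
  uniq s -> {in s, forall t, P (f t)} -> {in s &, forall t u, f t =1 f u -> t = u} ->
  (forall S, P S -> exists2 t, t \in s & f t =1 S) -> has_card P (size s).
Proof.
move=> s_uniq Pf f_inj f_onto.
have tnth_inj := elimT (tuple_uniqP (in_tuple s)) s_uniq.
exists (fun i => f (tnth (in_tuple s) i)); split=> [i | i j | S /f_onto[t t_in ft]].
- exact/Pf/mem_tnth.
- by move=> eq_f; apply: tnth_inj; apply: f_inj eq_f; apply: mem_tnth.
exists (Ordinal (etrans (index_mem t s) t_in)).
by rewrite (tnth_nth t) /= nth_index.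
Qed.

Definition kunz_semigroup (k1 k2 k3 n : nat) : bool :=
  [|| n %% 4 == 0, (n %% 4 == 1) && (k1 <= n %/ 4),
      (n %% 4 == 2) && (k2 <= n %/ 4) | (n %% 4 == 3) && (k3 <= n %/ 4)].

Definition kunz_inequalities (k1 k2 k3 : nat) : bool :=
  [&& k2 <= k1.*2, k3 <= k1 + k2, k2 <= k3.*2.+1 & k1 <= (k2 + k3).+1].

Lemma kunz_semigroupE k1 k2 k3 q r : r < 4 ->
  kunz_semigroup k1 k2 k3 (q * 4 + r) = (nth 0 [:: 0; k1; k2; k3] r <= q).
Proof.
move=> r_lt4; rewrite /kunz_semigroup modnMDl divnMDl // modn_small // divn_small // addn0.
by case: r r_lt4 => [|[|[|[|r]]]] //=; rewrite orbF.
Qed.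

Lemma kunz_coordinates S : numerical_semigroup S -> S 4 ->
  exists k1 k2 k3, S =1 kunz_semigroup k1 k2 k3.
Proof.
move=> S_ns S4.
have [k0 E0] := numerical_semigroup_threshold 0 S_ns S4 isT.
have [k1 E1] := numerical_semigroup_threshold 1 S_ns S4 isT.
have [k2 E2] := numerical_semigroup_threshold 2 S_ns S4 isT.
have [k3 E3] := numerical_semigroup_threshold 3 S_ns S4 isT.
have k0_eq0 : k0 = 0 by move: (E0 0); case: S_ns => -> _ _; lia.
exists k1, k2, k3 => n; rewrite (divn_eq n 4) kunz_semigroupE ?ltn_pmod //.
case: (n %% 4) (ltn_pmod n (isT : 0 < 4)) => [|[|[|[|r]]]] //= _;
  by rewrite ?E0 ?E1 ?E2 ?E3 ?k0_eq0.
Qed.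

Lemma kunz_semigroup_inj k1 k2 k3 l1 l2 l3 :
  kunz_semigroup k1 k2 k3 =1 kunz_semigroup l1 l2 l3 -> [/\ k1 = l1, k2 = l2 & k3 = l3].
Proof.
move=> E; have := E (k1 * 4 + 1); have := E (l1 * 4 + 1).
have := E (k2 * 4 + 2); have := E (l2 * 4 + 2).
have := E (k3 * 4 + 3); have := E (l3 * 4 + 3).
by rewrite !kunz_semigroupE //= !leqnn => *; split; lia.
Qed.

Lemma kunz_semigroup_addP k1 k2 k3 :
  reflect (forall a b, kunz_semigroup k1 k2 k3 a -> kunz_semigroup k1 k2 k3 b ->
                       kunz_semigroup k1 k2 k3 (a + b))
          (kunz_inequalities k1 k2 k3).
Proof.
apply: (iffP idP) => [|Kadd].
  by rewrite /kunz_inequalities /kunz_semigroup => ? a b ? ?; lia.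
set k := nth 0 [:: 0; k1; k2; k3].
have Kadd_res q1 r1 q2 r2 q r : r1 < 4 -> r2 < 4 -> r < 4 ->
    q1 * 4 + r1 + (q2 * 4 + r2) = q * 4 + r -> k r1 <= q1 -> k r2 <= q2 -> k r <= q.
  move=> r1_lt4 r2_lt4 r_lt4 sum_eq le1 le2.
  by rewrite -kunz_semigroupE // -sum_eq Kadd ?kunz_semigroupE.
apply/and4P; split.
- by apply: (Kadd_res k1 1 k1 1 _ 2) => //; lia.
- by apply: (Kadd_res k1 1 k2 2 _ 3) => //; lia.
- by apply: (Kadd_res k3 3 k3 3 _ 2) => //; lia.
- by apply: (Kadd_res k2 2 k3 3 _ 1) => //; lia.
Qed.

Lemma kunz_numerical_semigroupP k1 k2 k3 :
  numerical_semigroup (kunz_semigroup k1 k2 k3) <-> kunz_inequalities k1 k2 k3.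
Proof.
split=> [[_ Kadd _] | /kunz_semigroup_addP Kadd]; first exact/kunz_semigroup_addP.
split=> //; exists ((k1 + k2 + k3).+1 * 4) => n le_n.
rewrite (divn_eq n 4) kunz_semigroupE ?ltn_pmod //.
by case: (n %% 4) (ltn_pmod n (isT : 0 < 4)) => [|[|[|[|r]]]] //= _; lia.
Qed.

Lemma kunz_multiplicityP k1 k2 k3 :
  multiplicity (kunz_semigroup k1 k2 k3) 4 <-> [&& 0 < k1, 0 < k2 & 0 < k3].
Proof.
split=> [[_ _ gaps] | pos].
  have := gaps 1 isT; have := gaps 2 isT; have := gaps 3 isT.
  by rewrite /kunz_semigroup /= !divn_small //; lia.
by split=> //; case=> [|[|[|[|k]]]] //= _; rewrite /kunz_semigroup /= divn_small //; lia.
Qed.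

Lemma mem_residue_class m r k n : r < m ->
  (n \in [seq q * m + r | q <- iota 0 k]) = (n %% m == r) && (n %/ m < k).
Proof.
move=> r_lt_m; have m_gt0 : 0 < m by case: m r_lt_m.
apply/mapP/andP => [[q] | [/eqP n_mod n_div]].
  rewrite mem_iota => /andP[_ q_lt] ->.
  by rewrite modnMDl divnMDl // modn_small // divn_small // addn0 eqxx.
by exists (n %/ m); rewrite ?mem_iota // -n_mod -divn_eq.
Qed.

Definition kunz_gaps k1 k2 k3 : seq nat :=
  [seq q * 4 + 1 | q <- iota 0 k1] ++ [seq q * 4 + 2 | q <- iota 0 k2] ++
  [seq q * 4 + 3 | q <- iota 0 k3].

Lemma mem_kunz_gaps k1 k2 k3 n :
  (n \in kunz_gaps k1 k2 k3) = ~~ kunz_semigroup k1 k2 k3 n.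
Proof. by rewrite !mem_cat !mem_residue_class // /kunz_semigroup; lia. Qed.

Lemma kunz_gaps_uniq k1 k2 k3 : uniq (kunz_gaps k1 k2 k3).
Proof.
have progression_uniq r k : uniq [seq q * 4 + r | q <- iota 0 k].
  by rewrite map_inj_uniq ?iota_uniq // => q q' /addIn /eqP; rewrite eqn_pmul2r // => /eqP.
rewrite !cat_uniq !progression_uniq /= andbT.
by apply/andP; split; apply/hasPn => n;
  rewrite ?mem_cat !mem_residue_class // => n_mem; lia.
Qed.

Lemma genus_kunz_semigroup k1 k2 k3 : genus (kunz_semigroup k1 k2 k3) (k1 + k2 + k3).
Proof.
exists (kunz_gaps k1 k2 k3); split; first exact: kunz_gaps_uniq.
  exact: mem_kunz_gaps.
by rewrite !size_cat !size_map !size_iota addnA.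
Qed.

Lemma S4g_kunz_semigroupP g k1 k2 k3 :
  S4g g (kunz_semigroup k1 k2 k3) <->
  [/\ kunz_inequalities k1 k2 k3, [&& 0 < k1, 0 < k2 & 0 < k3] & g = k1 + k2 + k3].
Proof.
split=> [[ns mult gen] | [ineq pos ->]].
  split; [exact/kunz_numerical_semigroupP | exact/kunz_multiplicityP |].
  exact: genus_uniq gen (genus_kunz_semigroup _ _ _).
split; [exact/kunz_numerical_semigroupP | exact/kunz_multiplicityP |].
exact: genus_kunz_semigroup.
Qed.

Definition kunz_pair (g x y : nat) : bool :=
  [&& 0 < x, 0 < y, x + y < g & kunz_inequalities x y (g - x - y)].

Lemma kunz_pairP g x y :
  reflect (S4g g (kunz_semigroup x y (g - x - y))) (kunz_pair g x y).
Proof.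
apply: (iffP and4P) => [[x_gt0 y_gt0 lt_xy_g ineq] | /S4g_kunz_semigroupP[ineq pos g_eq]].
  by apply/S4g_kunz_semigroupP; split=> //; lia.
by split=> //; lia.
Qed.

Lemma kunz_pair_between g y x : 4 <= g -> 0 < y ->
  kunz_pair g x y =
  (maxn (y.+1 %/ 2) ((g - y.*2).+1 %/ 2) <= x <= minn ((g.*2.+1 - 3 * y) %/ 2) (g.+1 %/ 2)).
Proof. by move=> g_ge4 y_gt0; rewrite /kunz_pair /kunz_inequalities; lia. Qed.

Lemma sum_nat_between l h m n :
  \sum_(m <= y < n) ((l <= y <= h) : nat) = minn h.+1 n - maxn l m.
Proof.
elim: n => [|n IH]; first by rewrite big_geq //; lia.
have [le_mn | lt_nm] := leqP m n; last by rewrite big_geq //; lia.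
by rewrite big_nat_recr //= IH; lia.
Qed.

Lemma sum_kunz_row g y : 4 <= g -> 0 < y ->
  \sum_(0 <= x < g.+1) kunz_pair g x y = minn y.+1 (g.+1 - y.*2).
Proof.
move=> g_ge4 y_gt0; under eq_bigr => x _ do rewrite kunz_pair_between //.
by rewrite sum_nat_between; lia.
Qed.

Lemma sum_min_rec g :
  \sum_(1 <= y < g.+3) minn y.+1 (g.+3 - y.*2) =
  \sum_(1 <= y < g.+1) minn y.+1 (g.+1 - y.*2) + (g + 5) %/ 3.
Proof.
(* Row y + 1 for g + 2 is row y for g with the first argument of minn raised
   by one, which matters exactly when 3 y < g. *)
have row_shift y : 1 <= y < g.+2 ->
    minn y.+2 (g.+3 - y.+1.*2) = minn y.+1 (g.+1 - y.*2) + (1 <= y <= g.-1 %/ 3).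
  by move=> y_range; lia.
rewrite big_nat_recl // (eq_big_nat _ _ row_shift) big_split /= sum_nat_between.
by rewrite big_nat_recr //=; lia.
Qed.

Lemma sum_min_closed g :
  \sum_(1 <= y < g.+1) minn y.+1 (g.+1 - y.*2) = (g * g + 6 * g) %/ 12.
Proof.
elim/ltn_ind: g => -[|[|[|[|[|[|g]]]]]] IH; try by rewrite unlock.
have square_shift : g.+4.+2 * g.+4.+2 + 6 * g.+4.+2 = (6 + g) * 12 + (g * g + 6 * g).
  by ring.
rewrite !sum_min_rec IH; last by lia.
by rewrite square_shift divnMDl //; lia.
Qed.

Definition kunz_pairs g : seq (nat * nat) :=
  [seq p <- [seq (x, y) | y <- iota 0 g.+1, x <- iota 0 g.+1] | kunz_pair g p.1 p.2].

Lemma kunz_pairs_uniq g : uniq (kunz_pairs g).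
Proof.
rewrite filter_uniq // allpairs_uniq ?iota_uniq //.
by move=> [y1 x1] [y2 x2] _ _ [-> ->].
Qed.

Lemma mem_kunz_pairs g x y : ((x, y) \in kunz_pairs g) = kunz_pair g x y.
Proof.
rewrite mem_filter; apply/andP/idP => [[] // | xy_pair]; split=> //.
apply/allpairsP; exists (y, x); rewrite !mem_iota.
by move: xy_pair; rewrite /kunz_pair => ?; split=> //=; lia.
Qed.

Lemma size_kunz_pairs g :
  size (kunz_pairs g) = \sum_(0 <= y < g.+1) \sum_(0 <= x < g.+1) kunz_pair g x y.
Proof.
rewrite size_filter count_flatten sumnE !big_map; apply: eq_bigr => y _.
by rewrite count_map -sumn_count sumnE big_map.
Qed.

Lemma size_kunz_pairs_closed g : 4 <= g -> size (kunz_pairs g) = (g * g + 6 * g) %/ 12.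
Proof.
move=> g_ge4; rewrite size_kunz_pairs big_ltn // big1 => [|x _].
  rewrite -sum_min_closed add0n.
  by apply: eq_big_nat => y /andP[y_gt0 _]; apply: sum_kunz_row.
by rewrite /kunz_pair ltnn andbF.
Qed.

Lemma S4g_card g : has_card (S4g g) (size (kunz_pairs g)).
Proof.
apply: (@has_card_seq _ _ _ (fun p => kunz_semigroup p.1 p.2 (g - p.1 - p.2))).
- exact: kunz_pairs_uniq.
- by case=> x y; rewrite mem_kunz_pairs => /kunz_pairP.
- by case=> x y [x' y'] _ _ /kunz_semigroup_inj[/= -> -> _].
move=> S S4g_S; have [S_ns [_ S4 _] _] := S4g_S.
have [k1 [k2 [k3 eqS]]] := kunz_coordinates S_ns S4.
have S4g_K := S4g_eq eqS S4g_S.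
have k3_eq : g - k1 - k2 = k3 by case/S4g_kunz_semigroupP: S4g_K => _ _; lia.
exists (k1, k2); last by move=> n /=; rewrite k3_eq eqS.
by rewrite mem_kunz_pairs; apply/kunz_pairP; rewrite k3_eq.
Qed.

Local Open Scope ring_scope.

Lemma floor_natr_div (R : archiFieldType) (n d : nat) : (0 < d)%N ->
  Num.floor (n%:R / d%:R : R) = (n %/ d)%:Z.
Proof.
move=> d_gt0; apply: floor_def; rewrite -PoszD -!pmulrn.
rewrite ler_pdivlMr ?ltr0n // ltr_pdivrMr ?ltr0n // -!natrM ler_nat ltr_nat.
by have := divn_eq n d; have := ltn_pmod n d_gt0; nia.
Qed.

Lemma ceil_natr_div (R : archiFieldType) (n d : nat) : (0 < d)%N -> (0 < n)%N ->
  Num.ceil (n%:R / d%:R : R) = ((n + d.-1) %/ d)%:Z.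
Proof.
move=> d_gt0 n_gt0; apply: ceil_def.
have m_gt0 : (0 < (n + d.-1) %/ d)%N by rewrite divn_gt0 //; lia.
rewrite (subzn m_gt0) subn1 -!pmulrn.
rewrite ltr_pdivlMr ?ltr0n // ler_pdivrMr ?ltr0n // -!natrM ler_nat ltr_nat.
by have := divn_eq (n + d.-1) d; have := ltn_pmod (n + d.-1) d_gt0; nia.
Qed.

Ltac eval_divn := repeat match goal with |- context [ (?a %/ ?b)%N ] =>
  let v := eval vm_compute in (a %/ b)%N in change (a %/ b)%N with v end.

Lemma floor_expression_closed (g : nat) : (4 <= g)%N ->
    let G : rat := g%:R in
    let fl (x : rat) : rat := (Num.floor x)%:~R in
    let cl (x : rat) : rat := (Num.ceil x)%:~R in
    let a := fl (G / 4) in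
    let b := fl (G / 2) in
    let c := fl ((G + 5) / 6) in
    let d := fl ((G + 2) / 6) in
    let e := fl ((G + 2) / 4) in
    let h := fl ((G + 1) / 2) in
    let u := cl ((2 * G - 3) / 8) in
    let v := cl ((2 * G - 7) / 8) in
    ((g * g + 6 * g) %/ 12)%N%:R =
      - G + 5/2 * a + b + 1/2 * c + G * c - c * b - 3/2 * c ^+ 2
      - G * a + 3/2 * a ^+ 2 + a * b - 1/2 * d + d * b - 3/2 * d ^+ 2
      + 1/2 * e + 3/2 * e ^+ 2 - e * b + h * b - h * u + h
      - v * b + v * u - v.
Proof.
move=> g_ge4 G fl cl a b c d e h u v.
have fl_div (n k : nat) : (0 < k)%N -> fl (n%:R / k%:R) = (n %/ k)%N%:R.
  by move=> k_gt0; rewrite /fl floor_natr_div // pmulrn.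
have cl_div (n k : nat) : (0 < k)%N -> (0 < n)%N ->
    cl (n%:R / k%:R) = ((n + k.-1) %/ k)%N%:R.
  by move=> k_gt0 n_gt0; rewrite /cl ceil_natr_div // pmulrn.
have -> : a = (g %/ 4)%N%:R by exact: fl_div.
have -> : b = (g %/ 2)%N%:R by exact: fl_div.
have -> : c = ((g + 5) %/ 6)%N%:R by rewrite /c -natrD fl_div.
have -> : d = ((g + 2) %/ 6)%N%:R by rewrite /d -natrD fl_div.
have -> : e = ((g + 2) %/ 4)%N%:R by rewrite /e -natrD fl_div.
have -> : h = ((g + 1) %/ 2)%N%:R by rewrite /h /G natr1 fl_div // addn1.
have -> : u = ((2 * g - 3 + 7) %/ 8)%N%:R.
  by rewrite /u /G -natrM -natrB ?cl_div //; lia.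
have -> : v = ((2 * g - 7 + 7) %/ 8)%N%:R.
  by rewrite /v /G -natrM -natrB ?cl_div //; lia.
rewrite /G {a b c d e h u v G fl cl fl_div cl_div}.
(* With g = 24 q + r every floor is affine in q, so for each r the claim is a
   polynomial identity in q. *)
have [q [r [r_lt24 ->]]] : exists q r, (r < 24)%N /\ g = (24 * q + r)%N.
  by exists (g %/ 24)%N, (g %% 24)%N; rewrite ltn_pmod //; lia.
have -> : (((24 * q + r) * (24 * q + r) + 6 * (24 * q + r)) %/ 12 =
          48 * q * q + 4 * q * r + 12 * q + (r * r + 6 * r) %/ 12)%N by nia.
have -> : ((24 * q + r) %/ 4 = 6 * q + r %/ 4)%N by lia.
have -> : ((24 * q + r) %/ 2 = 12 * q + r %/ 2)%N by lia.
have -> : ((24 * q + r + 5) %/ 6 = 4 * q + (r + 5) %/ 6)%N by lia.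
have -> : ((24 * q + r + 2) %/ 6 = 4 * q + (r + 2) %/ 6)%N by lia.
have -> : ((24 * q + r + 2) %/ 4 = 6 * q + (r + 2) %/ 4)%N by lia.
have -> : ((24 * q + r + 1) %/ 2 = 12 * q + (r + 1) %/ 2)%N by lia.
have -> : ((2 * (24 * q + r) - 3 + 7) %/ 8 = 6 * q + (2 * r + 4) %/ 8)%N by lia.
have -> : ((2 * (24 * q + r) - 7 + 7) %/ 8 = 6 * q + (2 * r) %/ 8)%N by lia.
by do 24 (case: r r_lt24 => [|r] r_lt24;
  [eval_divn; rewrite ?(natrD, natrM); field; by [] |]).
Qed.

Theorem mainTheorem9 (g : nat) (hg : (3 <= g)%N) :
  (g = 3%N -> has_card (S4g g) 1) /\
  ((4 <= g)%N -> exists N : nat, has_card (S4g g) N /\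
    let G : rat := g%:R in
    let fl (x : rat) : rat := (Num.floor x)%:~R in
    let cl (x : rat) : rat := (Num.ceil x)%:~R in
    let a := fl (G / 4) in
    let b := fl (G / 2) in
    let c := fl ((G + 5) / 6) in
    let d := fl ((G + 2) / 6) in
    let e := fl ((G + 2) / 4) in
    let h := fl ((G + 1) / 2) in
    let u := cl ((2 * G - 3) / 8) in
    let v := cl ((2 * G - 7) / 8) in
    (N%:R : rat) =
      - G + 5/2 * a + b + 1/2 * c + G * c - c * b - 3/2 * c ^+ 2
      - G * a + 3/2 * a ^+ 2 + a * b - 1/2 * d + d * b - 3/2 * d ^+ 2
      + 1/2 * e + 3/2 * e ^+ 2 - e * b + h * b - h * u + h
      - v * b + v * u - v).
Proof.
split=> [-> | g_ge4]; first exact: S4g_card 3.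
exists (size (kunz_pairs g)); split; first exact: S4g_card.
by rewrite size_kunz_pairs_closed //; apply: floor_expression_closed.
Qed.
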